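(* Let $M$ be an $R$-module. Then $M$ satisfies the dual of proper strong Property $\mathcal{A}$ if and only if $M$ satisfies the dual of Property $\mathcal{A}$ and $\mathfrak{m}\cap W_R(M)$ is an ideal of $R$ for every maximal ideal $\mathfrak{m}$ of $R$.
   Context: All rings are commutative with identity. For an $R$-module $M$, $W_R(M)=\{r\in R : rM\neq M\}$. An $R$-module $M$ satisfies the dual of Property $\mathcal{A}$ if for every finitely generated ideal $I$ of $R$ with $I\subseteq W_R(M)$ we have $IM\neq M$. $M$ satisfies the dual of proper strong Property $\mathcal{A}$ if for every proper finitely generated ideal $I=\langle a_1,\dots,a_n\rangle$ of $R$ with $a_i\in W_R(M)$ for all $i$, we have $IM\neq M$. *)

From mathcomp Require Import all_boot all_algebra.
Set Implicit Arguments. Unset Strict Implicit. Unset Printing Implicit Defensive.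
Import GRing.Theory.
Local Open Scope ring_scope.

Section Defs.
Variable R : comPzRingType.

Definition is_ideal (I : R -> Prop) : Prop :=
  [/\ I 0, (forall x y, I x -> I y -> I (x + y)) & (forall r x, I x -> I (r * x))].

Definition proper_ideal (I : R -> Prop) : Prop := is_ideal I /\ ~ I 1.

Definition maximal_ideal (m : R -> Prop) : Prop :=
  proper_ideal m /\
  forall J : R -> Prop, proper_ideal J -> (forall x, m x -> J x) -> forall x, J x -> m x.

Definition ideal_gen (s : seq R) : R -> Prop :=
  fun x => exists c : 'I_(size s) -> R, x = \sum_(i < size s) c i * s`_i.

Definition fg_ideal (I : R -> Prop) : Prop :=
  is_ideal I /\ exists s : seq R, forall x, I x <-> ideal_gen s x.

Variable M : lmodType R.

Definition ideal_mul_mod (I : R -> Prop) : M -> Prop :=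
  fun m => exists n (a : 'I_n -> R) (x : 'I_n -> M),
      (forall i, I (a i)) /\ m = \sum_(i < n) a i *: x i.

Definition IM_neq_M (I : R -> Prop) : Prop := ~ (forall m : M, ideal_mul_mod I m).

Definition W (r : R) : Prop := ~ (forall m : M, exists m' : M, m = r *: m').

Definition dual_property_A : Prop :=
  forall I : R -> Prop, fg_ideal I -> (forall x, I x -> W x) -> IM_neq_M I.

Definition dual_proper_strong_property_A : Prop :=
  forall s : seq R, proper_ideal (ideal_gen s) -> (forall a, a \in s -> W a) ->
    IM_neq_M (ideal_gen s).

End Defs.

(* If M satisfies the dual of proper strong Property A, the ideal generated by
   finitely many elements of W_R(M) lies in W_R(M) as soon as it is proper;
   applied to 0 and to <x, y> with x, y in m ∩ W_R(M) this makes m ∩ W_R(M)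
   an ideal, and applied to a finitely generated I ⊆ W_R(M) (proper because
   1 ∉ W_R(M)) it gives Property A. Conversely, a proper ideal <a_1, ..., a_n>
   with all a_i in W_R(M) lies in some maximal ideal m by Krull's theorem, hence
   in the ideal m ∩ W_R(M) ⊆ W_R(M), and Property A applies. *)
From Pilot Require Import Defs.
From mathcomp Require Import all_boot all_algebra.
From mathcomp Require Import boolp classical_sets.
Set Implicit Arguments. Unset Strict Implicit. Unset Printing Implicit Defensive.
Import GRing.Theory.
Local Open Scope ring_scope.

(* [Defs.proper_ideal] is qualified because [all_algebra] exports ring_quotient's [proper_ideal]. *)

Section Ideals.
Variable R : comPzRingType.

Lemma is_ideal_ext (I J : R -> Prop) :
  (forall x, I x <-> J x) -> is_ideal I -> is_ideal J.
Proof.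
move=> IJ [I0 ID IM]; split; first exact/IJ.
- by move=> x y /IJ Ix /IJ Iy; apply/IJ/ID.
- by move=> r x /IJ Ix; apply/IJ/IM.
Qed.

Lemma proper_ideal_ext (I J : R -> Prop) :
  (forall x, I x <-> J x) -> Defs.proper_ideal I -> Defs.proper_ideal J.
Proof. by move=> IJ [II I1]; split; [exact: is_ideal_ext IJ II | move/IJ]. Qed.

Lemma proper_ideal_sub (I J : R -> Prop) :
  is_ideal I -> (forall x, I x -> J x) -> Defs.proper_ideal J -> Defs.proper_ideal I.
Proof. by move=> II IJ [_ J1]; split=> // /IJ. Qed.

Section Krull.
Local Open Scope classical_set_scope.
Variable J : set R.

Let chain_union (F : set (set R)) := J `|` \bigcup_(A in F) A.

Lemma chain_union_pair (F : set (set R)) x y :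
  total_on F subset -> chain_union F x -> chain_union F y ->
  (J x /\ J y) \/ exists2 A, F A & (J `|` A) x /\ (J `|` A) y.
Proof.
move=> Ftot [Jx|[A FA Ax]] [Jy|[B FB By]].
- by left.
- by right; exists B => //; split; [left|right].
- by right; exists A => //; split; [right|left].
- have [AB|BA] := Ftot _ _ FA FB.
  + by right; exists B => //; split; right => //; apply: AB.
  + by right; exists A => //; split; right => //; apply: BA.
Qed.

Lemma chain_union_proper_ideal (F : set (set R)) :
  Defs.proper_ideal J -> (forall A, F A -> Defs.proper_ideal (J `|` A)) ->
  total_on F subset -> Defs.proper_ideal (chain_union F).
Proof.
move=> [[J0 JD JM] J1] FP Ftot.
have in_union A z : F A -> (J `|` A) z -> chain_union F z.
  by move=> FA [Jz|Az]; [left | right; exists A].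
split; [split|].
- by left.
- move=> x y Ux Uy.
  have [[Jx Jy]|[A FA [Ax Ay]]] := chain_union_pair Ftot Ux Uy.
    by left; apply: JD.
  have [[_ AD _] _] := FP A FA.
  exact: in_union FA (AD _ _ Ax Ay).
- move=> r x Ux.
  have [[Jx _]|[A FA [Ax _]]] := chain_union_pair Ftot Ux Ux.
    by left; apply: JM.
  have [[_ _ AM] _] := FP A FA.
  exact: in_union FA (AM r _ Ax).
- case=> [//|[A FA A1]].
  by have [_ []] := FP A FA; right.
Qed.

(* The union with J makes the family closed under the union of the empty chain. *)
Lemma exists_maximal_ideal_sup :
  Defs.proper_ideal J -> exists2 m, maximal_ideal m & J `<=` m.
Proof.
move=> PJ.
have [A [PA Amax]] := @Zorn_bigcup R (fun A => Defs.proper_ideal (J `|` A))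
  (fun F FP Ftot => chain_union_proper_ideal PJ FP Ftot).
exists (J `|` A) => [|x]; last by left.
split=> // K PK mK x Kx; right; move: x Kx.
have JK t : J t -> K t by move=> Jt; apply: mK; left.
apply: contrapT => KnA; apply: (Amax K); first by split=> // t At; apply: mK; right.
by apply: proper_ideal_ext PK => t; split=> [|[/JK|]]; [right | ..].
Qed.

End Krull.

Lemma is_ideal_gen (s : seq R) : is_ideal (ideal_gen s).
Proof.
split.
- by exists (fun _ => 0); rewrite big1 // => i _; rewrite mul0r.
- move=> x y [c ->] [d ->]; exists (fun i => c i + d i).
  by rewrite -big_split; apply: eq_bigr => i _; rewrite mulrDl.
- move=> r x [c ->]; exists (fun i => r * c i).
  by rewrite mulr_sumr; apply: eq_bigr => i _; rewrite mulrA.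
Qed.

Lemma mem_ideal_gen (s : seq R) a : a \in s -> ideal_gen s a.
Proof.
move=> sa; have ilt : (index a s < size s)%N by rewrite index_mem.
exists (fun i => if i == Ordinal ilt then 1 else 0).
rewrite (bigD1 (Ordinal ilt)) //= eqxx mul1r nth_index // big1 ?addr0 //.
by move=> i /negbTE ->; rewrite mul0r.
Qed.

Lemma ideal_gen_min (s : seq R) (I : R -> Prop) :
  is_ideal I -> (forall a, a \in s -> I a) -> forall x, ideal_gen s x -> I x.
Proof.
move=> [I0 ID IM] sI x [c ->].
by apply: (big_ind I) => // i _; apply/IM/sI/mem_nth.
Qed.

End Ideals.

Section Module.
Variables (R : comPzRingType) (M : lmodType R).

Lemma ideal_mul_mod_sub (I J : R -> Prop) (m : M) :
  (forall x, I x -> J x) -> ideal_mul_mod I m -> ideal_mul_mod J m.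
Proof. by move=> IJ [n [a [x [Ia ->]]]]; exists n, a, x; split=> // i; apply: IJ. Qed.

Lemma notW1 : ~ W M 1.
Proof. by apply=> m; exists m; rewrite scale1r. Qed.

Lemma W_mull r x : W M x -> W M (r * x).
Proof.
move=> Wx rxM; apply: Wx => m; have [m' ->] := rxM m.
by exists (r *: m'); rewrite scalerA mulrC.
Qed.

Lemma ideal_mul_mod_full (I : R -> Prop) a :
  I a -> (forall m : M, exists m', m = a *: m') -> forall m : M, ideal_mul_mod I m.
Proof.
move=> Ia aM m; have [m' ->] := aM m.
by exists 1%N, (fun _ => a), (fun _ => m'); split=> //; rewrite big_ord1.
Qed.

Lemma proper_strong_ideal_gen_subW (s : seq R) :
  dual_proper_strong_property_A M -> Defs.proper_ideal (ideal_gen s) ->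
  (forall a, a \in s -> W M a) -> forall x, ideal_gen s x -> W M x.
Proof.
move=> PSA Ps sW x sx xM.
exact: PSA s Ps sW (ideal_mul_mod_full sx xM).
Qed.

Lemma dual_property_A_of_proper_strong :
  dual_proper_strong_property_A M -> dual_property_A M.
Proof.
move=> PSA I [II [s Is]] IW IM.
have sI x : ideal_gen s x -> I x by move/Is.
apply: (PSA s).
- by apply: proper_ideal_sub (is_ideal_gen s) sI _; split=> // /IW; apply: notW1.
- by move=> a /mem_ideal_gen/sI/IW.
- by move=> m; apply: ideal_mul_mod_sub (IM m) => x /Is.
Qed.

Lemma is_ideal_maximal_capW (mm : R -> Prop) :
  dual_proper_strong_property_A M -> maximal_ideal mm ->
  is_ideal (fun x => mm x /\ W M x).
Proof.
move=> PSA [[[m0 mD mM] m1] _].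
have gen_subW s x : (forall a, a \in s -> mm a /\ W M a) -> ideal_gen s x -> W M x.
  move=> smW; apply: proper_strong_ideal_gen_subW => // [|a /smW[]//].
  apply: proper_ideal_sub (is_ideal_gen s) _ (conj (And3 m0 mD mM) m1).
  by apply: ideal_gen_min => // a /smW[].
split.
- by split=> //; apply: (gen_subW [::]) => //; case: (@is_ideal_gen R [::]).
- move=> x y [mx Wx] [my Wy]; split; first exact: mD.
  apply: (gen_subW [:: x; y]); first by move=> a; rewrite !inE => /orP[]/eqP->.
  have [_ genD _] := @is_ideal_gen R [:: x; y].
  by apply: genD; apply: mem_ideal_gen; rewrite !inE eqxx ?orbT.
- by move=> r x [mx Wx]; split; [exact: mM | exact: W_mull].
Qed.

End Module.

Theorem theorem3p3 (R : comPzRingType) (M : lmodType R) :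
  dual_proper_strong_property_A M <->
  (dual_property_A M /\
   forall mm : R -> Prop, maximal_ideal mm -> is_ideal (fun x => mm x /\ W M x)).
Proof.
split.
  move=> PSA; split; first exact: dual_property_A_of_proper_strong.
  by move=> mm; apply: is_ideal_maximal_capW.
move=> [PA capW] s Ps sW.
have [mm max_mm s_mm] := exists_maximal_ideal_sup Ps.
apply: PA => [|x sx]; first by split; [exact: is_ideal_gen | exists s].
suff [] : mm x /\ W M x by [].
apply: ideal_gen_min (capW mm max_mm) _ _ sx => a sa.
by split; [apply/s_mm/mem_ideal_gen | exact: sW].
Qed.
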